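(* Let $\mathcal T$ be a $2$-deterministic $3$-automaton and let $x,y$ be infinite words such that the run $\gamma=q_0\xrightarrow{x,y|z}\cdots$ of $\mathcal T$ is accepting. If $y$ is normal, then there is a constant $K$ depending only on $\mathcal T$ such that for every factorization of $\gamma$ as a finite run $q_0\xrightarrow{u_1,v_1|w_1}q_1$ followed by an infinite run from $q_1$ with label $(x_1,y_1|z_1)$, with $|u_1|$ long enough, one has $|v_1|\le K|u_1|$.
   Context: A $3$-automaton is $\langle Q,A,\delta,I\rangle$ with finite state set $Q$, transitions $\delta\subseteq Q\times(A\cup\{\varepsilon\})^3\times Q$, initial states $I$. A run is a sequence of consecutive transitions; its label is the componentwise concatenation of transition labels; $p\xrightarrow{u_1,u_2|u_3}q$ denotes a finite run with label $(u_1,u_2,u_3)$. An infinite run is accepting if it starts in an initial state and all three label components are infinite. The automaton is $2$-deterministic if $I=\{q_0\}$ is a singleton and, for any two transitions from the same state with labels $(\alpha_1,\alpha_2,\alpha_3)$, $(\alpha'_1,\alpha'_2,\alpha'_3)$: $\alpha_j=\varepsilon$ for some $j\le2$ implies $\alpha'_j=\varepsilon$, and $\alpha_1=\alpha'_1,\alpha_2=\alpha'_2$ implies $\alpha_3=\alpha'_3$ and equal target states. It is assumed that no transition has both of its first two label components empty. An infinite word $y$ is normal if for every $\ell\ge1$ and $u\in A^\ell$, the number of occurrences of $u$ in $y[1..n]$ at positions $i\equiv1\bmod\ell$, divided by $n/\ell$, tends to $|A|^{-\ell}$. *)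

From mathcomp Require Import all_boot all_order all_algebra.
Set Implicit Arguments. Unset Strict Implicit. Unset Printing Implicit Defensive.
Import Order.TTheory GRing.Theory Num.Theory.

(* A transition of a 3-automaton over alphabet A with states Q:
   (source, (alpha1, alpha2, alpha3), target); None encodes epsilon. *)
Definition trans (A Q : finType) : finType :=
  (Q * (option A * option A * option A) * Q)%type.

Section Aut.
Variables (A Q : finType).

Definition src (t : trans A Q) : Q := t.1.1.
Definition tgt (t : trans A Q) : Q := t.2.
Definition lab1 (t : trans A Q) : option A := t.1.2.1.1.
Definition lab2 (t : trans A Q) : option A := t.1.2.1.2.
Definition lab3 (t : trans A Q) : option A := t.1.2.2.

Definition two_deterministic (delta : {set trans A Q}) (I : {set Q}) : Prop :=
  (exists q0, I = [set q0]) /\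
  forall t t', t \in delta -> t' \in delta -> src t = src t' ->
    (lab1 t = None -> lab1 t' = None) /\
    (lab2 t = None -> lab2 t' = None) /\
    (lab1 t = lab1 t' -> lab2 t = lab2 t' -> lab3 t = lab3 t' /\ tgt t = tgt t').

Definition no_double_eps (delta : {set trans A Q}) : Prop :=
  forall t, t \in delta -> ~ (lab1 t = None /\ lab2 t = None).

Definition is_run (delta : {set trans A Q}) (rho : nat -> trans A Q) : Prop :=
  forall i, rho i \in delta /\ tgt (rho i) = src (rho i.+1).

Definition comp_len (lab : trans A Q -> option A) (rho : nat -> trans A Q)
  (n : nat) : nat := \sum_(i < n) (lab (rho i) != None).

(* The component lab of the label of rho is the infinite word x
   (componentwise concatenation, and the component is infinite). *)
Definition comp_label (lab : trans A Q -> option A) (rho : nat -> trans A Q)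
  (x : nat -> A) : Prop :=
  (forall i a, lab (rho i) = Some a -> a = x (comp_len lab rho i)) /\
  (forall k, exists n, k < comp_len lab rho n).

Definition accepting_run (delta : {set trans A Q}) (I : {set Q})
  (rho : nat -> trans A Q) (x y z : nat -> A) : Prop :=
  is_run delta rho /\ src (rho 0) \in I /\
  comp_label lab1 rho x /\ comp_label lab2 rho y /\ comp_label lab3 rho z.
End Aut.

(* Number of occurrences of u (|u| = l) in y[1..n] at positions i = 1 mod l
   (0-indexed: blocks y[k l .. k l + l - 1] with k l + l <= n). *)
Definition block_count (A : finType) (y : nat -> A) (l : nat) (u : l.-tuple A)
  (n : nat) : nat :=
  \sum_(k < n %/ l) [forall j : 'I_l, y (k * l + j) == tnth u j].

Local Open Scope ring_scope.
Definition normal (A : finType) (y : nat -> A) : Prop :=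
  forall (l : nat) (u : l.-tuple A), (0 < l)%N ->
    forall eps : rat, 0 < eps -> exists N : nat, forall n : nat, (N <= n)%N ->
      `| (block_count y u n)%:R / (n%:R / l%:R) - (#|A|%:R ^+ l)^-1 | < eps.

(* The transitions reading no letter of x form, by 2-determinism,
   a partial deterministic automaton over the letters of y.  Call a word
   stalling if this automaton can read it from some state and still reach a
   state with an x-transition afterwards.  A state from which an x-transition
   is reachable reaches it within D letters, and one more letter then blocks;
   so among the words of length D+1 at least one is not readable, and
   iterating, the stalling words of length m are at most a quarter of all
   words once m is a large multiple of D+1.  By normality of y, at most half
   of the length-m blocks of y are then stalling.  While the run reads a
   non-stalling block it consumes a letter of x within m steps, because all
   states of an accepting run can still reach an x-transition.  Hence the
   number of letters of y read is linear in the number of letters of x read. *)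

From mathcomp Require Import all_boot all_order all_algebra.
From mathcomp Require Import zify ring lra.
Set Implicit Arguments. Unset Strict Implicit. Unset Printing Implicit Defensive.

Lemma sum_tupleS (T : finType) m (F : seq T -> nat) :
  \sum_(u : m.+1.-tuple T) F u = \sum_(a : T) \sum_(t : m.-tuple T) F (a :: t).
Proof.
rewrite pair_big /= (reindex (fun p : T * m.-tuple T => [tuple of p.1 :: p.2])) //.
apply: onW_bij; exists (fun u : m.+1.-tuple T => (thead u, [tuple of behead u])).
- by case=> a t /=; congr pair; apply: val_inj.
- by move=> u; rewrite [RHS]tuple_eta; apply: val_inj.
Qed.

Lemma sum_tuple_cat (T : finType) j M (F : seq T -> nat) :
  \sum_(u : (j + M).-tuple T) F u =
  \sum_(w : j.-tuple T) \sum_(v : M.-tuple T) F (w ++ v).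
Proof.
elim: j F => [|j IH] F.
  by rewrite (big_pred1 [tuple]) // => w; rewrite [w]tuple0 /= eq_refl.
rewrite (sum_tupleS (j + M)).
rewrite (sum_tupleS j (fun s => \sum_(v : M.-tuple T) F (s ++ v))).
by apply: eq_bigr => a _; rewrite (IH (fun s => F (a :: s))).
Qed.

Lemma eventually_forall_fin (T : finType) (P : T -> nat -> Prop) :
  (forall t, exists n0, forall n, n0 <= n -> P t n) ->
  exists n0, forall t n, n0 <= n -> P t n.
Proof.
move=> /fin_all_exists[n0 ev]; exists (\max_t n0 t) => t n le_n.
by apply: ev; apply: leq_trans le_n; apply: leq_bigmax.
Qed.

Lemma bernoulli_expn x k : x ^ k * (x + k.+1) <= (x + 1) ^ k.+1.
Proof.
elim: k => [|k IH]; first by rewrite expn0 mul1n expn1.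
rewrite expnS [(x + 1) ^ k.+2]expnS.
apply: leq_trans (_ : x ^ k * ((x + 1) * (x + k.+1)) <= _).
  by move: (x ^ k) => X; nia.
by rewrite mulnCA leq_mul2l IH orbT.
Qed.

Lemma sum_divn_blocks m K (g : nat -> nat) : 0 < m ->
  \sum_(0 <= j < K * m) g (j %/ m) = m * \sum_(0 <= k < K) g k.
Proof.
move=> m0; elim: K => [|K IH]; first by rewrite mul0n !big_geq // muln0.
rewrite (big_cat_nat (n := K * m)) //=; last by rewrite mulSnr leq_addr.
rewrite IH big_nat_recr //= mulnDr; congr (_ + _).
rewrite mulSnr -{1}(add0n (K * m)) big_addn addKn big_nat_cond.
rewrite (eq_bigr (fun _ => g K)); last first.
  by move=> j /andP[/andP[_ hj] _]; rewrite divnDMl // divn_small ?add0n.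
by rewrite -big_nat_cond sum_nat_const_nat subn0 mulnC.
Qed.

Lemma sum_nat_window a b n :
  \sum_(0 <= i < n) ((a <= i) && (i < b)) = minn n b - a.
Proof.
elim: n => [|n IH]; first by rewrite big_geq //; lia.
rewrite big_nat_recr //= IH.
by case: (leqP a n) => /= h1; case: (ltnP n b) => /= h2; lia.
Qed.

Section Walks.
Variables (A Q : finType) (step : Q -> A -> option Q) (final : pred Q).

Fixpoint walk (q : Q) (s : seq A) : option Q :=
  if s is a :: s' then (if step q a is Some r then walk r s' else None) else Some q.

Lemma walk_cat q s t :
  walk q (s ++ t) = if walk q s is Some r then walk r t else None.
Proof. by elim: s q => [|a s IH] q //=; case: step. Qed.

Definition step_rel : rel Q := fun p r => [exists a, step p a == Some r].

Definition live (q : Q) : bool := [exists r, connect step_rel q r && final r].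

Definition exits (q : Q) (s : seq A) : bool := oapp final false (walk q s).

Definition stays (q : Q) (s : seq A) : bool := oapp live false (walk q s).

Lemma walk_connect q s r : walk q s = Some r -> connect step_rel q r.
Proof.
elim: s q => [|a s IH] q /=; first by move=> [->].
case E: step => [p|] // /IH; apply: connect_trans; apply: connect1.
by apply/existsP; exists a; rewrite E.
Qed.

Lemma liveP q : reflect (exists s, exits q s) (live q).
Proof.
apply: (iffP existsP) => [[r /andP[/connectP[p pth ->] fin]] | [s]].
  elim: p q pth {fin}(fin) => [|p1 p IH] q /=; first by exists [::].
  case/andP=> /existsP[a /eqP E] /IH{}IH /IH[s ex].
  by exists (a :: s); rewrite /exits /= E.
rewrite /exits; case E: walk => [r|] //= fin.
by exists r; rewrite (walk_connect E) fin.
Qed.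

Lemma stays_live q s : stays q s -> live q.
Proof.
rewrite /stays; case E: walk => [r|] //= /existsP[p /andP[rp fin]].
by apply/existsP; exists p; rewrite (connect_trans (walk_connect E) rp) fin.
Qed.

Lemma exit_bound : exists D, forall q, live q -> exists2 s, exits q s & size s <= D.
Proof.
have /eventually_forall_fin[D exD] : forall q, exists D0, forall D, D0 <= D ->
    live q -> exists2 s, exits q s & size s <= D.
  move=> q; have [/liveP[s ex]|nlq] := boolP (live q); last by exists 0.
  by exists (size s) => D le_D _; exists s.
by exists D => q; apply: exD.
Qed.

Definition stay_count m q : nat := \sum_(u : m.-tuple A) stays q u.

Lemma stay_count_cat j M q :
  stay_count (j + M) q = \sum_(w : j.-tuple A) oapp (stay_count M) 0 (walk q w).
Proof.
rewrite /stay_count (sum_tuple_cat j M (fun s => nat_of_bool (stays q s))).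
apply: eq_bigr => w _; rewrite /stays.
under eq_bigr do rewrite walk_cat.
by case: walk => [r|] //=; rewrite big1.
Qed.

Lemma stay_count0 q : stay_count 0 q <= 1.
Proof.
rewrite /stay_count (big_pred1 [tuple]) => [|w]; first by case: stays.
by rewrite [w]tuple0 /= eq_refl.
Qed.

Lemma stay_count_nonlive m q : ~~ live q -> stay_count m q = 0.
Proof.
move=> nlq; rewrite /stay_count big1 // => u _.
by case E: stays => //; rewrite (stays_live E) in nlq.
Qed.

Lemma stay_count_blocked j M H q :
  (forall r, stay_count M r <= H) -> (exists2 w : seq A, size w = j & walk q w = None) ->
  stay_count (j + M) q <= (#|A| ^ j - 1) * H.
Proof.
move=> le_H [w /eqP sz_w w_stuck].
rewrite stay_count_cat (bigD1 (Tuple sz_w)) //= w_stuck add0n.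
apply: leq_trans (_ : \sum_(v | v != Tuple sz_w) H <= _).
  by apply: leq_sum => v _; case: walk.
by rewrite sum_nat_const cardC1 card_tuple subn1.
Qed.

Hypothesis final_stuck : forall q a, final q -> step q a = None.

Lemma exits_blocked D q s : 0 < #|A| -> exits q s -> size s <= D ->
  exists2 w : seq A, size w = D.+1 & walk q w = None.
Proof.
move=> /card_gt0P[a _] ex le_D; exists (s ++ nseq (D.+1 - size s) a).
  by rewrite size_cat size_nseq subnKC // ltnW.
move: ex; rewrite /exits walk_cat; case: walk => [r|] //= fin.
by rewrite subSn //= final_stuck.
Qed.

Lemma stay_count_decay D k q : 0 < #|A| ->
  (forall q, live q -> exists2 s, exits q s & size s <= D) ->
  stay_count (k * D.+1) q <= (#|A| ^ D.+1 - 1) ^ k.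
Proof.
move=> A0 exD; elim: k q => [|k IH] q; first exact: stay_count0.
have [lq|nlq] := boolP (live q); last by rewrite stay_count_nonlive.
have [s ex le_D] := exD q lq.
by rewrite mulSn expnS; apply: stay_count_blocked IH _; apply: exits_blocked ex le_D.
Qed.

Definition stalling m (u : m.-tuple A) : bool := [exists q, stays q u].

Lemma stalling_rare : 0 < #|A| ->
  exists2 m, 0 < m & 4 * \sum_(u : m.-tuple A) stalling u <= #|A| ^ m.
Proof.
move=> A0; have [D exD] := exit_bound.
(* [k] is chosen so that Bernoulli's inequality gives
   [4 * #|Q| * c ^ k.+1 <= (c + 1) ^ k.+1]. *)
set c := #|A| ^ D.+1 - 1; set k := 4 * #|Q| * c.
exists (k.+1 * D.+1) => //.
have -> : #|A| ^ (k.+1 * D.+1) = (c + 1) ^ k.+1.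
  by rewrite mulnC expnM subnK // expn_gt0 A0.
apply: leq_trans (_ : 4 * \sum_(q : Q) stay_count (k.+1 * D.+1) q <= _).
  rewrite leq_pmul2l // /stay_count exchange_big /=.
  apply: leq_sum => u _; case: (boolP (stalling u)) => // /existsP[q stq].
  by rewrite (bigD1 q) //= stq.
apply: leq_trans (_ : 4 * (#|Q| * c ^ k.+1) <= _).
  rewrite leq_pmul2l // -sum_nat_const.
  by apply: leq_sum => q _; apply: stay_count_decay.
apply: leq_trans (bernoulli_expn c k); rewrite expnS.
by move: (c ^ k) => X; rewrite /k; nia.
Qed.

End Walks.

Section YOnly.
Variables (A Q : finType) (delta : {set trans A Q}) (I : {set Q}).
Hypothesis det : two_deterministic delta I.

Definition ystep (q : Q) (a : A) : option Q :=
  if [pick t in delta | (src t == q) && (lab1 t == None) && (lab2 t == Some a)]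
  is Some t then Some (tgt t) else None.

Definition xstate (q : Q) : bool :=
  [exists t in delta, (src t == q) && (lab1 t != None)].

Lemma ystepE t a : t \in delta -> lab1 t = None -> lab2 t = Some a ->
  ystep (src t) a = Some (tgt t).
Proof.
move=> tD l1 l2; rewrite /ystep; case: pickP => [t' | /(_ t)]; last first.
  by rewrite tD eqxx l1 l2 eqxx.
case/andP=> t'D /andP[/andP[/eqP s /eqP l1'] /eqP l2'].
have [_ [_ same]] := det.2 _ _ t'D tD s.
by have [_ ->] := same (etrans l1' (esym l1)) (etrans l2' (esym l2)).
Qed.

Lemma xstate_stuck q a : xstate q -> ystep q a = None.
Proof.
case/exists_inP=> t tD /andP[/eqP st l1]; rewrite /ystep; case: pickP => // t'.
case/andP=> t'D /andP[/andP[/eqP s /eqP l1'] _].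
by have [/(_ l1') l1N _] := det.2 _ _ t'D tD (etrans s (esym st)); rewrite l1N in l1.
Qed.

End YOnly.

Section CompLen.
Variables (A Q : finType) (lab : trans A Q -> option A) (rho : nat -> trans A Q).
Local Notation len := (comp_len lab rho).

Lemma comp_lenE n : len n = \sum_(0 <= i < n) (lab (rho i) != None).
Proof. by rewrite big_mkord. Qed.

Lemma comp_lenS n : len n.+1 = len n + (lab (rho n) != None).
Proof. by rewrite /comp_len big_ord_recr. Qed.

Lemma comp_len_le n : len n <= n.
Proof.
elim: n => [|n IH]; first by rewrite /comp_len big_ord0.
by rewrite comp_lenS; case: eqP => /=; lia.
Qed.

Lemma comp_len_homo : {homo len : m n / m <= n}.
Proof. by apply: homo_leq => [//|? ? ? /leq_trans|n]; [apply | rewrite comp_lenS leq_addr]. Qed.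

Lemma comp_lenD n d : len (n + d) <= len n + d.
Proof.
elim: d => [|d IH]; first by rewrite !addn0.
by rewrite addnS comp_lenS; case: eqP => /=; lia.
Qed.

Lemma sum_comp_len (g : nat -> nat) n :
  \sum_(0 <= i < n) (lab (rho i) != None) * g (len i) = \sum_(0 <= j < len n) g j.
Proof.
elim: n => [|n IH]; first by rewrite /comp_len big_ord0 !big_geq.
rewrite big_nat_recr //= IH comp_lenS.
case: eqP => _ /=; first by rewrite addn0 mul0n addn0.
by rewrite addn1 big_nat_recr //= mul1n.
Qed.

End CompLen.

Definition block (A : finType) (y : nat -> A) m k : m.-tuple A :=
  [tuple y (k * m + t) | t < m].

Lemma block_val (A : finType) (y : nat -> A) m k :
  val (block y m k) = mkseq (fun t => y (k * m + t)) m.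
Proof. by rewrite /= /mkseq -val_enum_ord -map_comp. Qed.

Section NormalWord.
Variables (A : finType) (y : nat -> A).
Hypothesis y_normal : normal y.

Lemma block_countE m (u : m.-tuple A) K : 0 < m ->
  block_count y u (K * m) = \sum_(0 <= k < K) (block y m k == u).
Proof.
move=> m0; rewrite /block_count mulnK // big_mkord; apply: eq_bigr => k _.
congr nat_of_bool; apply/forallP/eqP => [same | <- j]; last by rewrite tnth_mktuple.
by apply: eq_from_tnth => j; rewrite tnth_mktuple (eqP (same j)).
Qed.

Import GRing.Theory Num.Theory.
Local Open Scope ring_scope.

Lemma normal_block_count m (u : m.-tuple A) : (0 < m)%N ->
  exists N0, forall N, (N0 <= N)%N -> (block_count y u N * m * #|A| ^ m <= 2 * N)%N.
Proof.
move=> m0; have A0 : (0 < #|A|)%N by apply/card_gt0P; exists (y 0).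
pose p : rat := (#|A|%:R ^+ m)^-1.
have p0 : 0 < p by rewrite invr_gt0 exprn_gt0 // ltr0n.
have [N0 close] := y_normal u m0 p0.
exists N0 => N le_N; have [->|N0p] := posnP N; first by rewrite /block_count div0n big_ord0.
set c := block_count y u N; set x : rat := c%:R / (N%:R / m%:R).
have lt_x : x < p + p by have := close N le_N; have := ler_norm (x - p); rewrite -/x; lra.
have NL0 : (0 : rat) < N%:R * #|A|%:R ^+ m by rewrite mulr_gt0 ?exprn_gt0 ?ltr0n.
have e1 : (c * m * #|A| ^ m)%:R = x * (N%:R * #|A|%:R ^+ m) :> rat.
  rewrite /x !natrM natrX; field.
  by apply/andP; split; rewrite pnatr_eq0 -lt0n.
have e2 : (p + p) * (N%:R * #|A|%:R ^+ m) = (2 * N)%:R :> rat.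
  by rewrite /p natrM; field; rewrite expf_neq0 // pnatr_eq0 -lt0n.
suff : (c * m * #|A| ^ m)%:R < (2 * N)%:R :> rat by rewrite ltr_nat => /ltnW.
by rewrite e1 -e2 ltr_pM2r.
Qed.

Local Close Scope ring_scope.

Lemma normal_sparse_blocks m (B : pred (m.-tuple A)) : 0 < m ->
  4 * \sum_(u : m.-tuple A) B u <= #|A| ^ m ->
  exists N0, forall K, N0 <= K * m -> 2 * \sum_(0 <= k < K) B (block y m k) <= K.
Proof.
move=> m0 rare; have A0 : 0 < #|A| by apply/card_gt0P; exists (y 0).
have [N0 freq] := eventually_forall_fin (fun u => normal_block_count u m0).
exists N0 => K le_K.
have countB : \sum_(0 <= k < K) B (block y m k) =
    \sum_(u : m.-tuple A) B u * block_count y u (K * m).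
  under [RHS]eq_bigr do rewrite block_countE // big_distrr.
  rewrite exchange_big /=; apply: eq_bigr => k _.
  rewrite (eq_bigr (fun u => if u == block y m k then nat_of_bool (B u) else 0)); last first.
    by move=> u _; rewrite eq_sym; case: eqP => [->|]; rewrite ?muln1 ?muln0.
  by rewrite -big_mkcond big_pred1_eq.
rewrite -(@leq_pmul2r (m * #|A| ^ m)) ?muln_gt0 ?m0 ?expn_gt0 ?A0 //.
rewrite countB -mulnA big_distrl /=.
apply: leq_trans (_ : 2 * \sum_(u : m.-tuple A) B u * (2 * (K * m)) <= _).
  rewrite leq_pmul2l //; apply: leq_sum => u _.
  by case: (B u); rewrite ?mul0n // !mul1n mulnA freq.
rewrite -big_distrl /=; have := leq_mul (leqnn (K * m)) rare.
by move: (\sum_(u : m.-tuple A) B u) (#|A| ^ m) => S L; nia.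
Qed.

End NormalWord.

Section Run.
Variables (A Q : finType) (delta : {set trans A Q}) (I : {set Q}).
Hypotheses (det : two_deterministic delta I) (nde : no_double_eps delta).
Variables (rho : nat -> trans A Q) (y : nat -> A).
Hypothesis run : is_run delta rho.
Hypothesis ylab : forall i a, lab2 (rho i) = Some a -> a = y (comp_len (@lab2 A Q) rho i).
Hypothesis xinf : forall k, exists n, k < comp_len (@lab1 A Q) rho n.

Local Notation xlen := (comp_len (@lab1 A Q) rho).
Local Notation ylen := (comp_len (@lab2 A Q) rho).
Local Notation st i := (src (rho i)).
Local Notation walk := (walk (ystep delta)).
Local Notation live := (live (ystep delta) (xstate delta)).
Local Notation stalling := (stalling (ystep delta) (xstate delta)).

Lemma yonly_lab2 i : lab1 (rho i) = None -> lab2 (rho i) != None.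
Proof. by move=> l1; case: (lab2 _) (nde (run i).1) => // /(_ (conj l1 erefl)). Qed.

Lemma yonly_ystep i : lab1 (rho i) = None -> ystep delta (st i) (y (ylen i)) = Some (st i.+1).
Proof.
move=> l1; have [tD <-] := run i.
have := yonly_lab2 l1; case l2: (lab2 (rho i)) => [a|] // _.
by rewrite -(ylab l2) (ystepE det tD l1 l2).
Qed.

Lemma live_before_x d j : xlen j < xlen (j + d) -> live (st j).
Proof.
elim: d j => [|d IH] j; first by rewrite addn0 ltnn.
case l1: (lab1 (rho j)) => [a|] => [_ | lt_x].
  apply/liveP; exists [::]; apply/exists_inP; exists (rho j); first exact: (run j).1.
  by rewrite eqxx l1.
have x_j : xlen j.+1 = xlen j by rewrite comp_lenS l1 addn0.
have /liveP[s ex] : live (st j.+1) by apply: IH; rewrite x_j addSnnS.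
by apply/liveP; exists (y (ylen j) :: s); rewrite /exits /= yonly_ystep.
Qed.

Lemma run_live j : live (st j).
Proof.
have [n lt_x] := xinf (xlen j).
have le_jn : j <= n by rewrite leqNgt; apply/negP => /ltnW/(comp_len_homo (@lab1 A Q) rho); lia.
by apply: (live_before_x (d := n - j)); rewrite subnKC.
Qed.

Lemma yonly_walk r i0 : (forall t, t < r -> lab1 (rho (i0 + t)) = None) ->
  walk (st i0) (mkseq (fun t => y (ylen i0 + t)) r) = Some (st (i0 + r)) /\
  ylen (i0 + r) = ylen i0 + r.
Proof.
elim: r => [|r IH] yonly; first by rewrite !addn0.
have l1 : lab1 (rho (i0 + r)) = None by apply: yonly.
have [w_r y_r] := IH (fun t lt_t => yonly t (ltnW lt_t)).
rewrite mkseqS -cats1 walk_cat w_r /= -y_r yonly_ystep // addnS.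
by rewrite comp_lenS y_r (yonly_lab2 l1) addn1 addnS.
Qed.

Lemma yonly_block_stalling m i0 k :
  (forall t, t < m -> lab1 (rho (i0 + t)) = None) -> ylen i0 = k * m ->
  stalling (block y m k).
Proof.
move=> yonly y_i0; apply/existsP; exists (st i0).
by rewrite /stays block_val -y_i0 (yonly_walk yonly).1 /= run_live.
Qed.

(* If step [i] and the [ylen i %% m] steps before it read only y, the run
   entered the block containing y-position [ylen i] at step [i - ylen i %% m]. *)
Lemma x_step_near m i : 0 < m -> lab1 (rho i) = None ->
  ~~ stalling (block y m (ylen i %/ m)) ->
  exists2 t, t < m & lab1 (rho (i - ylen i %% m + t)) != None.
Proof.
move=> m0 l1 /negP good; set r := ylen i %% m; set i0 := i - r.
case: (pickP [pred t : 'I_m | lab1 (rho (i0 + t)) != None]) => [t x_t|no_x].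
  by exists t.
have yonly t : t < m -> lab1 (rho (i0 + t)) = None.
  by move=> lt_t; apply/eqP; move/negbFE: (no_x (Ordinal lt_t)).
have lt_r : r < m by rewrite ltn_pmod.
have le_r : r <= i by apply: leq_trans (leq_mod _ m) (comp_len_le _ _ _).
have [_ y_i] := yonly_walk (fun t lt_t => yonly t (ltn_trans lt_t lt_r)).
case: good; apply: (yonly_block_stalling yonly).
by move: y_i; rewrite subnK // {1}(divn_eq (ylen i) m) -/r; lia.
Qed.

Lemma stalling_steps m n : 0 < m ->
  \sum_(0 <= i < n) ((lab1 (rho i) == None) && stalling (block y m (ylen i %/ m)))
  <= m * \sum_(0 <= k < (ylen n %/ m).+1) stalling (block y m k).
Proof.
move=> m0.
apply: leq_trans (_ : \sum_(0 <= i < n)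
    (lab2 (rho i) != None) * stalling (block y m (ylen i %/ m)) <= _).
  by apply: leq_sum => i _; case l1: lab1 => //=; rewrite (yonly_lab2 l1) mul1n.
rewrite (sum_comp_len _ _ (fun j => nat_of_bool (stalling (block y m (j %/ m))))).
rewrite -sum_divn_blocks // [X in _ <= X](big_cat_nat (n := ylen n)) ?leq_addr //.
exact/ltnW/ltn_ceil.
Qed.

Lemma progress_steps m n : 0 < m ->
  \sum_(0 <= i < n) ((lab1 (rho i) == None) && ~~ stalling (block y m (ylen i %/ m)))
  <= 2 * m * (xlen n + m).
Proof.
(* Each counted step is within distance m of an x-step, and each x-step is
   near fewer than 2m steps. *)
move=> m0; pose near i' i := (i' + 1 - m <= i) && (i < i' + m).
apply: leq_trans (_ : \sum_(0 <= i < n) \sum_(0 <= i' < n + m)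
    (lab1 (rho i') != None) * near i' i <= _).
  rewrite big_nat_cond [X in _ <= X]big_nat_cond.
  apply: leq_sum => i /andP[/andP[_ lt_i] _].
  case: (boolP (lab1 (rho i) == None)) => //= /eqP l1.
  case: (boolP (stalling _)) => //= /(x_step_near m0 l1)[t lt_t x_t].
  have lt_r : ylen i %% m < m by rewrite ltn_pmod.
  have le_r : ylen i %% m <= i by apply: leq_trans (leq_mod _ m) (comp_len_le _ _ _).
  have lt_i' : i - ylen i %% m + t < n + m by lia.
  rewrite big_mkord (bigD1 (Ordinal lt_i')) //= x_t mul1n.
  by apply: leq_trans (leq_addr _ _); rewrite lt0b /near; apply/andP; split; apply/leP; lia.
rewrite exchange_big /=.
apply: leq_trans (_ : \sum_(0 <= i' < n + m) (lab1 (rho i') != None) * (2 * m) <= _).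
  apply: leq_sum => i' _; rewrite -big_distrr /= sum_nat_window leq_mul2l.
  by apply/orP; right; lia.
by rewrite -big_distrl /= -comp_lenE mulnC leq_mul2l comp_lenD orbT.
Qed.

Lemma ylen_le_xlen m N0 n : 0 < m ->
  (forall K, N0 <= K * m -> 2 * \sum_(0 <= k < K) stalling (block y m k) <= K) ->
  N0 <= xlen n -> 0 < xlen n ->
  ylen n <= (4 * m * m + 5 * m + 2) * xlen n.
Proof.
move=> m0 sparse le_N0 u0.
have [lt_N0 | ge_N0] := ltnP (ylen n) N0; first by nia.
have yonly_split : ylen n <= xlen n +
    \sum_(0 <= i < n) ((lab1 (rho i) == None) && stalling (block y m (ylen i %/ m))) +
    \sum_(0 <= i < n) ((lab1 (rho i) == None) && ~~ stalling (block y m (ylen i %/ m))).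
  rewrite !comp_lenE -!big_split /=; apply: leq_sum => i _.
  by case: (lab1 _); case: (lab2 _); case: stalling.
have ceil_K := ltn_ceil (ylen n) m0.
have sparse_K := sparse _ (leq_trans ge_N0 (ltnW ceil_K)).
have le_K : (ylen n %/ m).+1 * m <= ylen n + m by rewrite mulSnr leq_add2r leq_trunc_div.
have := stalling_steps n m0; have := progress_steps n m0.
have um : m <= m * xlen n by rewrite leq_pmulr.
have umm : m * m <= m * m * xlen n by rewrite leq_pmulr.
nia.
Qed.

End Run.

Theorem lemma18 (A Q : finType) (delta : {set trans A Q}) (I : {set Q}) :
  two_deterministic delta I -> no_double_eps delta ->
  exists K : nat,
    forall (rho : nat -> trans A Q) (x y z : nat -> A),
      accepting_run delta I rho x y z -> normal y ->
      exists N : nat, forall n : nat,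
        (N <= comp_len (@lab1 A Q) rho n)%N ->
        (comp_len (@lab2 A Q) rho n <= K * comp_len (@lab1 A Q) rho n)%N.
Proof.
move=> det nde; have [A0 | A_gt0] := posnP #|A|.
  by exists 0 => rho x y z; have := card0_eq A0 (y 0); rewrite inE.
have [m m0 rare] := stalling_rare (xstate_stuck det) A_gt0.
exists (4 * m * m + 5 * m + 2) => rho x y z [run [_ [[_ xinf] [[ylab _] _]]]] y_normal.
have [N0 sparse] := normal_sparse_blocks y_normal m0 rare.
exists (maxn N0 1) => n; rewrite geq_max => /andP[le_N0 x_gt0].
exact: (ylen_le_xlen det nde run ylab xinf m0 sparse).
Qed.
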